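(* Let $f\in R(A_2)$, $g\in R(A_1^* )$, $k\in K_2$, let $x\in D_2=D(A_2)\cap D(A_1^* )$ be the unique solution of $A_2x=f$, $A_1^*x=g$, $\pi_2x=k$, let $\tilde x\in H_2$, $e:=x-\tilde x$, $e_{A_1}:=\pi_{A_1}e$, $e_{A_2^*}:=\pi_{A_2^*}e$, $e_{K_2}:=\pi_2e$. (i) If $\tilde x\in D(A_1^* )$, then $e\in D(A_1^* )$, $e_{A_1}\in D(\mathcal{A}_1^* )$ with $A_1^*e_{A_1}=A_1^*e$, and $\|e_{A_1}\|_{H_2}\le c_1\|A_1^*\tilde x-g\|_{H_1}=c_1\|A_1^*e\|_{H_1}$. (ii) If $\tilde x\in D(A_2)$, then $e\in D(A_2)$, $e_{A_2^*}\in D(\mathcal{A}_2)$ with $A_2e_{A_2^*}=A_2e$, and $\|e_{A_2^*}\|_{H_2}\le c_2\|A_2\tilde x-f\|_{H_3}=c_2\|A_2e\|_{H_3}$. (iii) If $\tilde x\in D_2$, then $e\in D_2$ and $$\|e\|_{D_2}^2=\|e_{A_1}\|^2_{H_2}+\|e_{K_2}\|^2_{H_2}+\|e_{A_2^*}\|^2_{H_2}+\|A_2e\|^2_{H_3}+\|A_1^*e\|^2_{H_1}\le\|e_{K_2}\|^2_{H_2}+(1+c_2^2)\|A_2e\|^2_{H_3}+(1+c_1^2)\|A_1^*e\|^2_{H_1},$$ with $e_{K_2}=k-\pi_2\tilde x$, $A_2e=f-A_2\tilde x$, $A_1^*e=g-A_1^*\tilde x$.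
   Context: Let $H_0,\dots,H_4$ be Hilbert spaces and, for $\ell=0,\dots,3$, $A_\ell:D(A_\ell)\subset H_\ell\to H_{\ell+1}$ densely defined closed linear operators with Hilbert space adjoints $A_\ell^*$, satisfying $R(A_\ell)\subset N(A_{\ell+1})$ for $\ell=0,1,2$. Standing assumption: $R(A_1)$ and $R(A_2)$ are closed and $K_2$ is finite dimensional. $D_2:=D(A_2)\cap D(A_1^* )$ with norm $\|x\|_{D_2}^2=\|x\|^2_{H_2}+\|A_2x\|^2_{H_3}+\|A_1^*x\|^2_{H_1}$; $K_2:=N(A_2)\cap N(A_1^* )$, $\pi_2:H_2\to K_2$ orthogonal projector; $\pi_{A_1}$, $\pi_{A_2^*}$ orthogonal projectors of $H_2$ onto $R(A_1)$, $R(A_2^* )$. $D(\mathcal{A}_2):=D(A_2)\cap R(A_2^* )$, $D(\mathcal{A}_1^* ):=D(A_1^* )\cap R(A_1)$. $c_\ell\in(0,\infty)$ is the best constant with $\|x\|_{H_\ell}\le c_\ell\|A_\ell x\|_{H_{\ell+1}}$ for $x\in D(A_\ell)\cap R(A_\ell^* )$ (equivalently $\|y\|_{H_{\ell+1}}\le c_\ell\|A_\ell^*y\|_{H_\ell}$ for $y\in D(A_\ell^* )\cap R(A_\ell)$). *)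

From HB Require Import structures.
From mathcomp Require Import all_boot all_order all_algebra.
From mathcomp Require Import reals.
Set Implicit Arguments. Unset Strict Implicit. Unset Printing Implicit Defensive.
Import Order.TTheory GRing.Theory Num.Theory.
Local Open Scope ring_scope.

Section Hilbert.
Variable R : realType.

Record inner_product (V : lmodType R) := InnerProduct {
  ip : V -> V -> R;
  ip_sym : forall x y, ip x y = ip y x;
  ip_linl : forall (a : R) (x y z : V), ip (a *: x + y) z = a * ip x z + ip y z;
  ip_ge0 : forall x, 0 <= ip x x;
  ip_eq0 : forall x, ip x x = 0 -> x = 0
}.

Definition ip_norm (V : lmodType R) (s : inner_product V) (x : V) : R :=
  Num.sqrt (ip s x x).

Definition ip_cvg (V : lmodType R) (s : inner_product V) (u : nat -> V) (l : V) :=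
  forall eps : R, 0 < eps -> exists N : nat,
    forall n : nat, (N <= n)%N -> ip_norm s (u n - l) < eps.

Definition ip_cauchy (V : lmodType R) (s : inner_product V) (u : nat -> V) :=
  forall eps : R, 0 < eps -> exists N : nat,
    forall m n : nat, (N <= m)%N -> (N <= n)%N -> ip_norm s (u m - u n) < eps.

Definition ip_complete (V : lmodType R) (s : inner_product V) :=
  forall u : nat -> V, ip_cauchy s u -> exists l, ip_cvg s u l.

Record hilbert := Hilbert {
  hspace :> lmodType R;
  hinner : inner_product hspace;
  hcomplete : ip_complete hinner
}.

Definition inner (H : hilbert) (x y : H) : R := ip (hinner H) x y.
Definition hnorm (H : hilbert) (x : H) : R := ip_norm (hinner H) x.
Definition hcvg (H : hilbert) (u : nat -> H) (l : H) := ip_cvg (hinner H) u l.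

Definition closed_set (H : hilbert) (S : H -> Prop) :=
  forall (u : nat -> H) (l : H), (forall n, S (u n)) -> hcvg u l -> S l.

Definition range (H H' : hilbert) (D : H -> Prop) (A : H -> H') : H' -> Prop :=
  fun y => exists x, D x /\ A x = y.

Definition kernel (H H' : hilbert) (D : H -> Prop) (A : H -> H') : H -> Prop :=
  fun x => D x /\ A x = 0.

Definition dd_closed_op (H H' : hilbert) (D : H -> Prop) (A : H -> H') :=
  [/\ D 0,
      (forall (a : R) x y, D x -> D y -> D (a *: x + y)),
      (forall (a : R) x y, D x -> D y -> A (a *: x + y) = a *: A x + A y),
      (forall (x : H) (eps : R), 0 < eps -> exists d, D d /\ hnorm (x - d) < eps) &
      (forall (u : nat -> H) (x : H) (y : H'),
          (forall n, D (u n)) -> hcvg u x -> hcvg (fun n => A (u n)) y ->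
          D x /\ A x = y)].

Definition is_adjoint (H H' : hilbert) (D : H -> Prop) (A : H -> H')
    (Ds : H' -> Prop) (As : H' -> H) :=
  (forall y : H', Ds y <-> exists z : H, forall x, D x -> inner (A x) y = inner x z)
  /\ (forall y : H', Ds y -> forall x, D x -> inner (A x) y = inner x (As y)).

Definition orth_proj (H : hilbert) (S : H -> Prop) (P : H -> H) :=
  forall x : H, S (P x) /\ (forall y, S y -> inner (x - P x) y = 0).

Definition finite_dim (H : hilbert) (S : H -> Prop) :=
  exists (n : nat) (b : 'I_n -> H), forall x, S x ->
    exists a : 'I_n -> R, x = \sum_(i < n) a i *: b i.

Definition poincare_bound (H H' : hilbert) (D : H -> Prop) (A : H -> H')
    (Ds : H' -> Prop) (As : H' -> H) (c : R) :=
  forall x, D x -> range Ds As x -> hnorm x <= c * hnorm (A x).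

Definition poincare_bound_adj (H H' : hilbert) (D : H -> Prop) (A : H -> H')
    (Ds : H' -> Prop) (As : H' -> H) (c : R) :=
  forall y, Ds y -> range D A y -> hnorm y <= c * hnorm (As y).

Definition best_const (H H' : hilbert) (D : H -> Prop) (A : H -> H')
    (Ds : H' -> Prop) (As : H' -> H) (c : R) :=
  [/\ 0 < c,
      poincare_bound D A Ds As c,
      (forall c', poincare_bound D A Ds As c' -> c <= c'),
      poincare_bound_adj D A Ds As c &
      (forall c', poincare_bound_adj D A Ds As c' -> c <= c')].

End Hilbert.

(* Write e_1, e_K, e_2 for the components of e in R(A_1), K_2, R(A_2^* ).  The
   residual e - e_1 is orthogonal to R(A_1), hence lies in N(A_1^* ), so
   A_1^* e_1 = A_1^* e and the Poincare inequality with constant c_1 bounds e_1.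
   Dually e - e_2 is orthogonal to R(A_2^* ); that this forces e - e_2 into
   N(A_2) uses closedness of A_2 and is proved by projecting (e - e_2, 0) onto
   the closed graph of A_2 (the projection exists by completeness, via a
   minimizing sequence and the parallelogram law).  Finally the complex property
   R(A_1) in N(A_2) makes e = e_1 + e_K + e_2 an orthogonal decomposition, so
   Pythagoras gives the identity in (iii) and the bounds of (i), (ii) the
   estimate. *)

From HB Require Import structures.
From mathcomp Require Import all_boot all_order all_algebra.
From mathcomp Require Import reals.
From mathcomp Require Import ring lra.
Import Order.TTheory GRing.Theory Num.Theory.
Local Open Scope ring_scope.
Set Implicit Arguments. Unset Strict Implicit.

Lemma inv_succ_lt_eventually (R : realType) (eps : R) : 0 < eps ->
  exists N, forall n, (N <= n)%N -> n.+1%:R^-1 < eps.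
Proof.
move=> /ltr_add_invr [N]; rewrite add0r => hN; exists N => n le_Nn.
by apply: le_lt_trans hN; rewrite lef_pV2 ?posrE // ler_nat ltnS.
Qed.

Lemma le_of_le_add_small (R : realType) (a b c : R) : 0 <= c ->
  (forall s, 0 < s <= 1 -> a <= b + s * c) -> a <= b.
Proof.
move=> c0 small; apply/ler_addgt0Pr => e e0.
pose s := Num.min 1 (e / (c + 1)).
have s_gt0 : 0 < s by rewrite lt_min ltr01 divr_gt0 // ltr_wpDl.
have s_le1 : s <= 1 by rewrite ge_min lexx.
have sc_le : s * c <= e.
  have : s <= e / (c + 1) by rewrite ge_min lexx orbT.
  rewrite ler_pdivlMr ?ltr_wpDl // => h; nra.
by apply: le_trans (small s _) _; rewrite ?s_gt0 ?s_le1 ?lerD2l.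
Qed.

Lemma quadratic_ge0_eq0 (R : realType) (b c : R) : 0 <= c ->
  (forall t, 0 <= 2 * t * b + t ^+ 2 * c) -> b = 0.
Proof.
move=> c_ge0 quad_ge0; pose k := (c + 1)^-1.
have k_gt0 : 0 < k by rewrite invr_gt0 ltr_wpDl.
have kc_le1 : k * c <= 1 by rewrite ler_pdivrMl ?ltr_wpDl // mulr1 lerDl.
have := quad_ge0 (- b * k); rewrite !expr2 => h.
have : b * b * k <= 0 by nra.
rewrite pmulr_lle0 // => bb_le0.
by apply/eqP; rewrite -sqrf_eq0 eq_le expr2 bb_le0 sqr_ge0.
Qed.

Section InnerProduct.
Variables (R : realType) (H : hilbert R).
Implicit Types (a b c x y z : H) (s : R).

Lemma innerC x y : inner x y = inner y x.
Proof. exact: ip_sym. Qed.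

Lemma inner_ge0 x : 0 <= inner x x.
Proof. exact: ip_ge0. Qed.

Lemma inner_eq0 x : inner x x = 0 -> x = 0.
Proof. exact: ip_eq0. Qed.

Lemma innerDl x y z : inner (x + y) z = inner x z + inner y z.
Proof. by have := ip_linl (hinner H) 1 x y z; rewrite scale1r mul1r. Qed.

Lemma inner0l z : inner 0 z = 0.
Proof. by have := innerDl 0 0 z; rewrite addr0; lra. Qed.

Lemma innerZl s x z : inner (s *: x) z = s * inner x z.
Proof. by have := ip_linl (hinner H) s x 0 z; rewrite addr0 -/(inner 0 z) inner0l addr0. Qed.

Lemma innerNl x z : inner (- x) z = - inner x z.
Proof. by rewrite -scaleN1r innerZl mulN1r. Qed.

Lemma innerBl x y z : inner (x - y) z = inner x z - inner y z.
Proof. by rewrite innerDl innerNl. Qed.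

Lemma inner0r z : inner z 0 = 0.
Proof. by rewrite innerC inner0l. Qed.

Lemma innerDr x y z : inner z (x + y) = inner z x + inner z y.
Proof. by rewrite !(innerC z) innerDl. Qed.

Lemma innerZr s x z : inner z (s *: x) = s * inner z x.
Proof. by rewrite !(innerC z) innerZl. Qed.

Lemma innerNr x z : inner z (- x) = - inner z x.
Proof. by rewrite !(innerC z) innerNl. Qed.

Lemma innerBr x y z : inner z (x - y) = inner z x - inner z y.
Proof. by rewrite innerDr innerNr. Qed.

Lemma innerNN x : inner (- x) (- x) = inner x x.
Proof. by rewrite innerNl innerNr opprK. Qed.

Lemma hnorm_ge0 x : 0 <= hnorm x.
Proof. exact: sqrtr_ge0. Qed.

Lemma sqr_hnorm x : hnorm x ^+ 2 = inner x x.
Proof. by rewrite sqr_sqrtr // inner_ge0. Qed.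

Lemma hnorm_lt_sqr x s : 0 < s -> (hnorm x < s) = (inner x x < s ^+ 2).
Proof. by move=> s0; rewrite -sqr_hnorm ltr_pXn2r // ?nnegrE ?hnorm_ge0 ?ltW. Qed.

Lemma hdistC x y : hnorm (x - y) = hnorm (y - x).
Proof. by rewrite /hnorm /ip_norm -!/(inner _ _) -opprB innerNN. Qed.

Lemma inner_young s a b : 0 < s -> 2 * inner a b <= s * inner a a + s^-1 * inner b b.
Proof.
move=> s0; have := inner_ge0 (s *: a - b).
rewrite !(innerBl, innerBr, innerZl, innerZr) (innerC b a) => sq_ge0.
rewrite -(ler_pM2l s0) mulrDr !mulrA mulfV ?gt_eqF // mul1r; nra.
Qed.

Lemma inner_add_le s a b : 0 < s ->
  inner (a + b) (a + b) <= (1 + s) * inner a a + (1 + s^-1) * inner b b.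
Proof.
move=> s0; have := inner_young a b s0.
by rewrite !(innerDl, innerDr) (innerC b a); lra.
Qed.

Lemma inner_addZ s a b :
  inner (a + s *: b) (a + s *: b) = inner a a + 2 * s * inner a b + s ^+ 2 * inner b b.
Proof. by rewrite !(innerDl, innerDr, innerZl, innerZr) (innerC b a); ring. Qed.

Lemma parallelogram_mid a b :
  inner a a + inner b b
  = 2 * inner (2^-1 *: (a + b)) (2^-1 *: (a + b)) + 2^-1 * inner (a - b) (a - b).
Proof.
rewrite !(innerZl, innerZr, innerDl, innerDr, innerNl, innerNr) (innerC b a).
by field.
Qed.

Lemma pythagoras3 a b c : inner a b = 0 -> inner a c = 0 -> inner b c = 0 ->
  inner (a + b + c) (a + b + c) = inner a a + inner b b + inner c c.
Proof.
move=> ab ac bc.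
by rewrite !(innerDl, innerDr) (innerC b a) (innerC c a) (innerC c b) ab ac bc; lra.
Qed.

Lemma cauchy_of_inv_bound (u : nat -> H) :
  (forall m n, inner (u m - u n) (u m - u n) <= 2 * m.+1%:R^-1 + 2 * n.+1%:R^-1) ->
  ip_cauchy (hinner H) u.
Proof.
move=> bound eps eps_gt0.
have eps_quarter : 0 < eps ^+ 2 / 4 by rewrite divr_gt0 ?exprn_gt0.
have [N hN] := inv_succ_lt_eventually eps_quarter.
exists N => m n le_Nm le_Nn; rewrite -/(hnorm _) hnorm_lt_sqr //.
have := bound m n; have := hN m le_Nm; have := hN n le_Nn.
set x := m.+1%:R^-1; set y := n.+1%:R^-1; set z := eps ^+ 2; lra.
Qed.

End InnerProduct.

Section ClosedOperator.
Variables (R : realType) (H H' : hilbert R) (D : H -> Prop) (A : H -> H').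
Hypothesis hA : dd_closed_op D A.

Lemma dom0 : D 0.
Proof. by case: hA. Qed.

Lemma domZD a x y : D x -> D y -> D (a *: x + y).
Proof. by case: hA => _ + _ _ _; apply. Qed.

Lemma opZD a x y : D x -> D y -> A (a *: x + y) = a *: A x + A y.
Proof. by case: hA => _ _ + _ _; apply. Qed.

Lemma op0 : A 0 = 0.
Proof.
have := opZD 1 dom0 dom0; rewrite scaler0 addr0 scale1r => A0_double.
by apply: (addrI (A 0)); rewrite addr0 -A0_double.
Qed.

Lemma domD x y : D x -> D y -> D (x + y).
Proof. by move=> Dx Dy; have := domZD 1 Dx Dy; rewrite scale1r. Qed.

Lemma opD x y : D x -> D y -> A (x + y) = A x + A y.
Proof. by move=> Dx Dy; have := opZD 1 Dx Dy; rewrite !scale1r. Qed.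

Lemma domZ a x : D x -> D (a *: x).
Proof. by move=> Dx; have := domZD a Dx dom0; rewrite addr0. Qed.

Lemma opZ a x : D x -> A (a *: x) = a *: A x.
Proof. by move=> Dx; have := opZD a Dx dom0; rewrite !addr0 op0 addr0. Qed.

Lemma domB x y : D x -> D y -> D (x - y).
Proof. by move=> Dx Dy; have := domZD (-1) Dy Dx; rewrite scaleN1r addrC. Qed.

Lemma opB x y : D x -> D y -> A (x - y) = A x - A y.
Proof. by move=> Dx Dy; have := opZD (-1) Dy Dx; rewrite !scaleN1r addrC [RHS]addrC. Qed.

Lemma kernelB x y : kernel D A x -> kernel D A y -> kernel D A (x - y).
Proof. by move=> [Dx Ax] [Dy Ay]; split; rewrite ?opB ?Ax ?Ay ?subrr //; apply: domB. Qed.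

(* Pick d in D(A) with |w - d| < |w|; then |w|^2 = <w - d, w> <= |w - d|^2 by Young. *)
Lemma orth_dom_eq0 w : (forall v, D v -> inner v w = 0) -> w = 0.
Proof.
move=> orth_w; apply: inner_eq0; apply/eqP; rewrite eq_le inner_ge0 andbT leNgt.
apply/negP => w_gt0; have [_ _ _ dense _] := hA.
have [d [Dd]] := dense w (Num.sqrt (inner w w)) (ltac:(by rewrite sqrtr_gt0)).
rewrite hnorm_lt_sqr ?sqrtr_gt0 // sqr_sqrtr ?inner_ge0 // => close.
have ww : inner (w - d) w = inner w w by rewrite innerBl (orth_w d) // subr0.
have := inner_young (w - d) w ltr01; rewrite invr1 !mul1r ww; lra.
Qed.

End ClosedOperator.

Section GraphMinimizer.
Variables (R : realType) (H H' : hilbert R) (D : H -> Prop) (A : H -> H').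
Hypothesis hA : dd_closed_op D A.
Variable q : H.

Definition graph_sqnorm (w : H) := inner w w + inner (A w) (A w).

(* Squared distance in H x H' from (q, 0) to the graph point (u, A u). *)
Definition graph_sqdist (u : H) := inner (q - u) (q - u) + inner (A u) (A u).

Definition graph_values (r : R) := exists2 u, D u & r = graph_sqdist u.

Definition graph_inf := inf graph_values.

Lemma graph_sqdist_ge0 u : 0 <= graph_sqdist u.
Proof. by rewrite addr_ge0 ?inner_ge0. Qed.

Lemma has_inf_graph_values : classical_sets.has_inf graph_values.
Proof.
split; first by exists (graph_sqdist 0), 0; first exact: (dom0 hA).
by exists 0 => _ [u _ ->]; apply: graph_sqdist_ge0.
Qed.

Lemma graph_inf_le w : D w -> graph_inf <= graph_sqdist w.
Proof. by move=> Dw; apply: (ge_inf has_inf_graph_values.2); exists w. Qed.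

Lemma graph_parallelogram u v : D u -> D v ->
  graph_sqdist u + graph_sqdist v
  = 2 * graph_sqdist (2^-1 *: (u + v)) + 2^-1 * graph_sqnorm (u - v).
Proof.
move=> Du Dv; have Duv := domD hA Du Dv.
rewrite /graph_sqdist /graph_sqnorm (opB hA) // (opZ hA) // (opD hA) //.
have pq := parallelogram_mid (q - v) (q - u); have pA := parallelogram_mid (A u) (A v).
have mid : 2^-1 *: (q - v + (q - u)) = q - 2^-1 *: (u + v).
  rewrite addrACA -opprD [v + u]addrC scalerDr scalerN -[2^-1 *: (q + q)]/(2^-1 *: (q *+ 2)).
  by rewrite -scaler_nat scalerA mulVf ?pnatr_eq0 // scale1r.
have diff : q - v - (q - u) = u - v by rewrite opprB addrC addrA subrK.
rewrite mid diff in pq; lra.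
Qed.

Lemma graph_sqdist_le s u l : 0 < s -> D u -> D l ->
  graph_sqdist l <= (1 + s) * graph_sqdist u + (1 + s^-1) * graph_sqnorm (u - l).
Proof.
move=> s_gt0 Du Dl; rewrite /graph_sqdist /graph_sqnorm (opB hA) //.
have := inner_add_le (q - u) (u - l) s_gt0; rewrite addrA subrK.
have := inner_add_le (A u) (A l - A u) s_gt0; rewrite [A u + _]addrC subrK -opprB innerNN.
lra.
Qed.

Lemma minimizing_seq : exists u : nat -> H,
  forall n, D (u n) /\ graph_sqdist (u n) < graph_inf + n.+1%:R^-1.
Proof.
suff /boolp.choice [u hu] : forall n : nat, exists u,
    D u /\ graph_sqdist u < graph_inf + n.+1%:R^-1 by exists u.
move=> n; have n_gt0 : 0 < n.+1%:R^-1 :> R by rewrite invr_gt0.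
by have [_ [u Du ->] close] := inf_adherent n_gt0 has_inf_graph_values; exists u.
Qed.

Lemma graph_inf_ge0 : 0 <= graph_inf.
Proof.
apply: lb_le_inf; first exact: has_inf_graph_values.1.
by move=> _ [u _ ->]; apply: graph_sqdist_ge0.
Qed.

Section MinimizingSequence.
Variable u : nat -> H.
Hypothesis hu : forall n, D (u n) /\ graph_sqdist (u n) < graph_inf + n.+1%:R^-1.

Lemma minimizing_seq_sqnorm m n :
  graph_sqnorm (u m - u n) <= 2 * m.+1%:R^-1 + 2 * n.+1%:R^-1.
Proof.
have [[Dm Jm] [Dn Jn]] := (hu m, hu n).
have := graph_parallelogram Dm Dn; have := graph_inf_le (domZ hA 2^-1 (domD hA Dm Dn)).
move: Jm Jn; set x := m.+1%:R^-1; set y := n.+1%:R^-1; lra.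
Qed.

Lemma minimizing_seq_cvg : exists l, [/\ D l, hcvg u l & hcvg (fun n => A (u n)) (A l)].
Proof.
have bound m n := minimizing_seq_sqnorm m n.
have Du n : D (u n) := (hu n).1.
have [l ul] : exists l, hcvg u l.
  apply/hcomplete/cauchy_of_inv_bound => m n; apply: le_trans (bound m n).
  by rewrite lerDl inner_ge0.
have [y Auy] : exists y, hcvg (fun n => A (u n)) y.
  apply/hcomplete/cauchy_of_inv_bound => m n; apply: le_trans (bound m n).
  by rewrite -(opB hA) /graph_sqnorm ?lerDr ?inner_ge0 //; exact: Du.
have [_ _ _ _ graph_closed] := hA.
have [Dl Aly] := graph_closed u l y Du ul Auy.
by exists l; rewrite Aly.
Qed.

Lemma minimizing_seq_limit_le l : D l -> hcvg u l -> hcvg (fun n => A (u n)) (A l) ->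
  graph_sqdist l <= graph_inf.
Proof.
move=> Dl ul Aul; set d := graph_inf.
(* For n large, graph_sqdist_le bounds graph_sqdist l by
   (1 + s) (d + s^2) + (1 + 1/s) 2 s^2 <= d + s (d + 6). *)
apply: (@le_of_le_add_small _ _ _ (d + 6)) => [|s /andP[s_gt0 s_le1]].
  by have := graph_inf_ge0; rewrite -/d; lra.
have s2_gt0 : 0 < s ^+ 2 by rewrite exprn_gt0.
have [N1 h1] := inv_succ_lt_eventually s2_gt0.
have [N2 h2] := ul s s_gt0; have [N3 h3] := Aul s s_gt0.
pose n := maxn N1 (maxn N2 N3).
have [Nn1 Nn2 Nn3] : [/\ (N1 <= n)%N, (N2 <= n)%N & (N3 <= n)%N].
  by rewrite !leq_max !leqnn !orbT.
have [Dn Jn] := hu n.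
have {}Jn : graph_sqdist (u n) <= d + s ^+ 2 by apply/ltW/(lt_trans Jn); rewrite ltrD2l h1.
have Gn : graph_sqnorm (u n - l) <= 2 * s ^+ 2.
  have := h2 n Nn2; have := h3 n Nn3; rewrite -!/(hnorm _) !hnorm_lt_sqr //.
  by rewrite /graph_sqnorm (opB hA) //; lra.
have b1 : (1 + s) * graph_sqdist (u n) <= (1 + s) * (d + s ^+ 2).
  by rewrite ler_wpM2l // addr_ge0 // ltW.
have b2 : (1 + s^-1) * graph_sqnorm (u n - l) <= (1 + s^-1) * (2 * s ^+ 2).
  by rewrite ler_wpM2l // addr_ge0 // invr_ge0 ltW.
have e1 : (1 + s) * (d + s ^+ 2) = d + s * d + s ^+ 2 + s * s ^+ 2 by ring.
have e2 : (1 + s^-1) * (2 * s ^+ 2) = 2 * s ^+ 2 + 2 * s by field; rewrite gt_eqF.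
have s2_le : s ^+ 2 <= s by rewrite expr2 ger_pMl.
have s3_le : s * s ^+ 2 <= s by rewrite ger_pMr // (le_trans s2_le).
have := graph_sqdist_le s_gt0 Dn Dl; rewrite [s * _]mulrDr; lra.
Qed.

End MinimizingSequence.

Lemma graph_minimizer : exists2 l, D l & forall w, D w -> graph_sqdist l <= graph_sqdist w.
Proof.
have [u hu] := minimizing_seq.
have [l [Dl ul Aul]] := minimizing_seq_cvg hu.
exists l => // w Dw; apply: le_trans (graph_inf_le Dw).
exact: minimizing_seq_limit_le.
Qed.

Lemma graph_minimizer_normal_eq l : D l ->
  (forall w, D w -> graph_sqdist l <= graph_sqdist w) ->
  forall v, D v -> inner (A l) (A v) = inner (q - l) v.
Proof.
move=> Dl l_min v Dv; apply/eqP; rewrite -subr_eq0; apply/eqP.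
apply: (quadratic_ge0_eq0 (c := graph_sqnorm v)) => [|t].
  by rewrite addr_ge0 ?inner_ge0.
have := l_min _ (domZD hA t Dv Dl); rewrite /graph_sqdist (opZD hA) //.
have -> : q - (t *: v + l) = q - l + (- t) *: v by rewrite opprD addrCA addrC scaleNr.
rewrite [t *: A v + _]addrC !inner_addZ sqrrN /graph_sqnorm; lra.
Qed.

End GraphMinimizer.

Section OrthProj.
Variables (R : realType) (H : hilbert R) (S : H -> Prop) (P : H -> H).
Hypothesis hP : orth_proj S P.
Hypothesis subr_closed_S : forall a b, S a -> S b -> S (a - b).

Lemma orth_proj_eq x p : S p -> (forall y, S y -> inner (x - p) y = 0) -> P x = p.
Proof.
move=> Sp orth_p; have [SPx orth_Px] := hP x.
have Sd := subr_closed_S SPx Sp.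
have := orth_Px _ Sd; have := orth_p _ Sd; rewrite !(innerBl, innerBr) => h1 h2.
by apply/eqP; rewrite -subr_eq0; apply/eqP/inner_eq0; rewrite !(innerBl, innerBr); lra.
Qed.

Lemma orth_projB x y : P (x - y) = P x - P y.
Proof.
have [[SPx orth_x] [SPy orth_y]] := (hP x, hP y).
apply: orth_proj_eq => [|z Sz]; first exact: subr_closed_S.
by have := orth_x z Sz; have := orth_y z Sz; rewrite !innerBl; lra.
Qed.

End OrthProj.

Section Adjoint.
Variables (R : realType) (H H' : hilbert R).
Variables (D : H -> Prop) (A : H -> H') (Ds : H' -> Prop) (As : H' -> H).
Hypotheses (hA : dd_closed_op D A) (hAs : is_adjoint D A Ds As).

Lemma adj_kernel_of_orth y : (forall u, D u -> inner (A u) y = 0) -> kernel Ds As y.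
Proof.
case: hAs => dom_As As_adj orth_y.
have Dy : Ds y by apply/dom_As; exists 0; move=> u Du; rewrite inner0r orth_y.
by split=> //; apply: (orth_dom_eq0 hA) => u Du; rewrite -As_adj ?orth_y.
Qed.

Lemma adj_domB y y' : Ds y -> Ds y' -> Ds (y - y').
Proof.
case: hAs => dom_As As_adj Dy Dy'; apply/dom_As; exists (As y - As y'); move=> u Du.
by rewrite !innerBr !As_adj.
Qed.

Lemma adj_opB y y' : Ds y -> Ds y' -> As (y - y') = As y - As y'.
Proof.
case: hAs => _ As_adj Dy Dy'; apply/eqP; rewrite -subr_eq0; apply/eqP.
apply: (orth_dom_eq0 hA) => u Du.
rewrite !innerBr -!As_adj ?innerBr ?subrr //; exact: adj_domB.
Qed.

Lemma adj_kernelB y y' : kernel Ds As y -> kernel Ds As y' -> kernel Ds As (y - y').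
Proof.
by move=> [Dy Ay] [Dy' Ay']; split; rewrite ?adj_opB ?Ay ?Ay' ?subrr //; apply: adj_domB.
Qed.

Lemma range_orth_adj_kernel a y : range D A a -> kernel Ds As y -> inner a y = 0.
Proof. by move=> [u [Du <-]] [Dy Ay]; rewrite hAs.2 // Ay inner0r. Qed.

Lemma kernel_orth_adj_range x b : kernel D A x -> range Ds As b -> inner x b = 0.
Proof. by move=> [Dx Ax] [y [Dy <-]]; rewrite -hAs.2 // Ax inner0l. Qed.

(* The graph point (l, A l) nearest to (q, 0) satisfies the normal equation
   A^* (A l) = q - l; orthogonality of q to R(A^* ) then forces q = l and A l = 0. *)
Lemma kernel_of_orth_adj_range q : (forall y, Ds y -> inner q (As y) = 0) -> kernel D A q.
Proof.
move=> orth_q; have [l Dl l_min] := graph_minimizer hA q.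
have normal := graph_minimizer_normal_eq hA Dl l_min.
have DsAl : Ds (A l).
  by apply/hAs.1; exists (q - l); move=> v Dv; rewrite innerC normal // innerC.
have AsAl : As (A l) = q - l.
  apply/eqP; rewrite -subr_eq0; apply/eqP; apply: (orth_dom_eq0 hA) => v Dv.
  by rewrite innerBr -hAs.2 // innerC normal // innerC subrr.
have q_orth := orth_q _ DsAl; rewrite AsAl in q_orth.
have ql_sq : inner (q - l) (q - l) = - inner (A l) (A l).
  by rewrite innerBl q_orth normal // innerC sub0r.
have := inner_ge0 (q - l); have := inner_ge0 (A l) => Al_ge0 ql_ge0.
have /inner_eq0/eqP : inner (q - l) (q - l) = 0 by lra.
rewrite subr_eq0 => /eqP ->; split=> //; apply: inner_eq0; lra.
Qed.

Lemma adj_kernel_sub_proj_range P e : orth_proj (range D A) P -> kernel Ds As (e - P e).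
Proof.
move=> hP; apply: adj_kernel_of_orth => u Du; rewrite innerC.
by apply: (hP e).2; exists u.
Qed.

Lemma kernel_sub_proj_adj_range P e : orth_proj (range Ds As) P -> kernel D A (e - P e).
Proof.
move=> hP; apply: kernel_of_orth_adj_range => y Dy.
by apply: (hP e).2; exists y.
Qed.

Lemma proj_range_adj_estimate P c e :
  orth_proj (range D A) P -> poincare_bound_adj D A Ds As c -> Ds e ->
  [/\ Ds (P e), As (P e) = As e & hnorm (P e) <= c * hnorm (As e)].
Proof.
move=> hP bound De; have [Dr Ar] := adj_kernel_sub_proj_range e hP.
have Pe : P e = e - (e - P e) by rewrite opprB addrC subrK.
have DPe : Ds (P e) by rewrite Pe; apply: adj_domB.
have AsPe : As (P e) = As e by rewrite Pe adj_opB // Ar subr0.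
by split=> //; rewrite -AsPe bound //; exact: (hP e).1.
Qed.

Lemma proj_adj_range_estimate P c e :
  orth_proj (range Ds As) P -> poincare_bound D A Ds As c -> D e ->
  [/\ D (P e), A (P e) = A e & hnorm (P e) <= c * hnorm (A e)].
Proof.
move=> hP bound De; have [Dr Ar] := kernel_sub_proj_adj_range e hP.
have Pe : P e = e - (e - P e) by rewrite opprB addrC subrK.
have DPe : D (P e) by rewrite Pe; apply: (domB hA).
have APe : A (P e) = A e by rewrite Pe (opB hA) // Ar subr0.
by split=> //; rewrite -APe bound //; exact: (hP e).1.
Qed.

Lemma adj_error_estimate P c x xt :
  orth_proj (range D A) P -> poincare_bound_adj D A Ds As c -> Ds x -> Ds xt ->
  [/\ Ds (x - xt), Ds (P (x - xt)) /\ range D A (P (x - xt)),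
      As (P (x - xt)) = As (x - xt), hnorm (P (x - xt)) <= c * hnorm (As xt - As x)
    & c * hnorm (As xt - As x) = c * hnorm (As (x - xt))].
Proof.
move=> hP bound Dx Dxt; have De := adj_domB Dx Dxt.
have [DPe AsPe] := proj_range_adj_estimate hP bound De.
by rewrite hdistC -adj_opB //; split=> //; split=> //; apply: (hP _).1.
Qed.

Lemma op_error_estimate P c x xt :
  orth_proj (range Ds As) P -> poincare_bound D A Ds As c -> D x -> D xt ->
  [/\ D (x - xt), D (P (x - xt)) /\ range Ds As (P (x - xt)),
      A (P (x - xt)) = A (x - xt), hnorm (P (x - xt)) <= c * hnorm (A xt - A x)
    & c * hnorm (A xt - A x) = c * hnorm (A (x - xt))].
Proof.
move=> hP bound Dx Dxt; have De := domB hA Dx Dxt.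
have [DPe APe] := proj_adj_range_estimate hP bound De.
by rewrite hdistC -(opB hA) //; split=> //; split=> //; apply: (hP _).1.
Qed.

End Adjoint.

Section HilbertComplex.
Variables (R : realType) (H1 H2 H3 : hilbert R).
Variables (D1 : H1 -> Prop) (A1 : H1 -> H2) (D1s : H2 -> Prop) (A1s : H2 -> H1).
Variables (D2 : H2 -> Prop) (A2 : H2 -> H3) (D2s : H3 -> Prop) (A2s : H3 -> H2).
Hypotheses (hA1 : dd_closed_op D1 A1) (hA1s : is_adjoint D1 A1 D1s A1s).
Hypotheses (hA2 : dd_closed_op D2 A2) (hA2s : is_adjoint D2 A2 D2s A2s).
Hypothesis complex12 : forall y, range D1 A1 y -> kernel D2 A2 y.

Definition harmonic (x : H2) := kernel D2 A2 x /\ kernel D1s A1s x.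

Lemma harmonicB a b : harmonic a -> harmonic b -> harmonic (a - b).
Proof.
by move=> [K2a K1a] [K2b K1b]; split; [apply: (kernelB hA2) | apply: (adj_kernelB hA1 hA1s)].
Qed.

Lemma adj_range_sub_adj_kernel b : range D2s A2s b -> kernel D1s A1s b.
Proof.
move=> Rb; apply: (adj_kernel_of_orth hA1 hA1s) => u Du.
by apply: (kernel_orth_adj_range hA2s) => //; apply: complex12; exists u.
Qed.

Variables (pi piA1 piA2s : H2 -> H2).
Hypotheses (hpi : orth_proj harmonic pi) (hpiA1 : orth_proj (range D1 A1) piA1).
Hypothesis hpiA2s : orth_proj (range D2s A2s) piA2s.

Lemma harmonic_projE e : pi e = e - piA1 e - piA2s e.
Proof.
have [RA1 RA2s] := ((hpiA1 e).1, (hpiA2s e).1).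
apply: (orth_proj_eq hpi harmonicB) => [|k [K2k K1k]]; first split.
- rewrite addrAC; apply: (kernelB hA2); last exact: complex12.
  exact: (kernel_sub_proj_adj_range hA2 hA2s).
- apply: (adj_kernelB hA1 hA1s); last exact: adj_range_sub_adj_kernel.
  exact: (adj_kernel_sub_proj_range hA1 hA1s).
- rewrite !opprD !opprK addrA addNKr innerDl (range_orth_adj_kernel hA1s) //.
  by rewrite innerC (kernel_orth_adj_range hA2s) // addr0.
Qed.

Lemma hodge_pythagoras e :
  hnorm e ^+ 2 = hnorm (piA1 e) ^+ 2 + hnorm (pi e) ^+ 2 + hnorm (piA2s e) ^+ 2.
Proof.
have [RA1 RA2s] := ((hpiA1 e).1, (hpiA2s e).1).
have [K2 K1] : harmonic (pi e) by apply: (hpi e).1.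
have K2A1 := complex12 RA1.
have decomp : e = pi e + piA2s e + piA1 e by rewrite harmonic_projE !subrK.
rewrite {1}decomp !sqr_hnorm pythagoras3; first lra.
- exact: (kernel_orth_adj_range hA2s).
- by rewrite innerC (range_orth_adj_kernel hA1s).
- by rewrite innerC (kernel_orth_adj_range hA2s).
Qed.

End HilbertComplex.

Unset Implicit Arguments.

Theorem corollary4p2 (R : realType) (H0 H1 H2 H3 H4 : hilbert R)
  (D0 : H0 -> Prop) (A0 : H0 -> H1) (D0s : H1 -> Prop) (A0s : H1 -> H0)
  (D1 : H1 -> Prop) (A1 : H1 -> H2) (D1s : H2 -> Prop) (A1s : H2 -> H1)
  (D2 : H2 -> Prop) (A2 : H2 -> H3) (D2s : H3 -> Prop) (A2s : H3 -> H2)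
  (D3 : H3 -> Prop) (A3 : H3 -> H4) (D3s : H4 -> Prop) (A3s : H4 -> H3)
  (hA0 : dd_closed_op D0 A0) (hA1 : dd_closed_op D1 A1)
  (hA2 : dd_closed_op D2 A2) (hA3 : dd_closed_op D3 A3)
  (hA0s : is_adjoint D0 A0 D0s A0s) (hA1s : is_adjoint D1 A1 D1s A1s)
  (hA2s : is_adjoint D2 A2 D2s A2s) (hA3s : is_adjoint D3 A3 D3s A3s)
  (* complex property R(A_l) \subset N(A_{l+1}) *)
  (hc0 : forall y, range D0 A0 y -> kernel D1 A1 y)
  (hc1 : forall y, range D1 A1 y -> kernel D2 A2 y)
  (hc2 : forall y, range D2 A2 y -> kernel D3 A3 y)
  (* standing assumptions *)
  (hR1 : closed_set (range D1 A1)) (hR2 : closed_set (range D2 A2))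
  (hK2 : finite_dim (fun x => kernel D2 A2 x /\ kernel D1s A1s x))
  (* orthogonal projectors onto K_2, R(A_1), R(A_2^* ) *)
  (pi2 piA1 piA2s : H2 -> H2)
  (hpi2 : orth_proj (fun x => kernel D2 A2 x /\ kernel D1s A1s x) pi2)
  (hpiA1 : orth_proj (range D1 A1) piA1)
  (hpiA2s : orth_proj (range D2s A2s) piA2s)
  (* best constants c_1, c_2 *)
  (c1 c2 : R)
  (hc1b : best_const D1 A1 D1s A1s c1) (hc2b : best_const D2 A2 D2s A2s c2)
  (* data and the solution x *)
  (f : H3) (g : H1) (k : H2)
  (hf : range D2 A2 f) (hg : range D1s A1s g)
  (hk : kernel D2 A2 k /\ kernel D1s A1s k)
  (x : H2) (hxD2 : D2 x) (hxD1s : D1s x)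
  (hxf : A2 x = f) (hxg : A1s x = g) (hxk : pi2 x = k)
  (xt : H2) :
  let e := x - xt in
  let eA1 := piA1 e in
  let eA2s := piA2s e in
  let eK2 := pi2 e in
  (* (i) *)
  (D1s xt ->
     [/\ D1s e, D1s eA1 /\ range D1 A1 eA1, A1s eA1 = A1s e,
         hnorm eA1 <= c1 * hnorm (A1s xt - g)
       & c1 * hnorm (A1s xt - g) = c1 * hnorm (A1s e)]) /\
  (* (ii) *)
  (D2 xt ->
     [/\ D2 e, D2 eA2s /\ range D2s A2s eA2s, A2 eA2s = A2 e,
         hnorm eA2s <= c2 * hnorm (A2 xt - f)
       & c2 * hnorm (A2 xt - f) = c2 * hnorm (A2 e)]) /\
  (* (iii) *)
  (D2 xt -> D1s xt ->
     let normD2sq := hnorm e ^+ 2 + hnorm (A2 e) ^+ 2 + hnorm (A1s e) ^+ 2 in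
     [/\ D2 e /\ D1s e,
         normD2sq = hnorm eA1 ^+ 2 + hnorm eK2 ^+ 2 + hnorm eA2s ^+ 2
                    + hnorm (A2 e) ^+ 2 + hnorm (A1s e) ^+ 2,
         hnorm eA1 ^+ 2 + hnorm eK2 ^+ 2 + hnorm eA2s ^+ 2
           + hnorm (A2 e) ^+ 2 + hnorm (A1s e) ^+ 2
           <= hnorm eK2 ^+ 2 + (1 + c2 ^+ 2) * hnorm (A2 e) ^+ 2
              + (1 + c1 ^+ 2) * hnorm (A1s e) ^+ 2
       & [/\ eK2 = k - pi2 xt, A2 e = f - A2 xt & A1s e = g - A1s xt]]).
Proof.
move=> e eA1 eA2s eK2.
have [c1_gt0 _ _ poincare1 _] := hc1b; have [c2_gt0 poincare2 _ _ _] := hc2b.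
have part_i (Dxt : D1s xt) := adj_error_estimate hA1 hA1s hpiA1 poincare1 hxD1s Dxt.
have part_ii (Dxt : D2 xt) := op_error_estimate hA2 hA2s hpiA2s poincare2 hxD2 Dxt.
rewrite -hxg -hxf; split; first exact: part_i.
split=> [|Dxt2 Dxt1 normD2sq]; first exact: part_ii.
have [De1 _ _ _ _] := part_i Dxt1; have [De2 _ _ _ _] := part_ii Dxt2.
have [_ _ bound1] := proj_range_adj_estimate hA1 hA1s hpiA1 poincare1 De1.
have [_ _ bound2] := proj_adj_range_estimate hA2 hA2s hpiA2s poincare2 De2.
have sq1 : hnorm eA1 ^+ 2 <= c1 ^+ 2 * hnorm (A1s e) ^+ 2.
  by rewrite -exprMn ler_pXn2r ?nnegrE ?mulr_ge0 ?hnorm_ge0 ?(ltW c1_gt0).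
have sq2 : hnorm eA2s ^+ 2 <= c2 ^+ 2 * hnorm (A2 e) ^+ 2.
  by rewrite -exprMn ler_pXn2r ?nnegrE ?mulr_ge0 ?hnorm_ge0 ?(ltW c2_gt0).
split=> //.
- by rewrite /normD2sq (hodge_pythagoras hA1 hA1s hA2 hA2s hc1 hpi2 hpiA1 hpiA2s).
- lra.
- rewrite /eK2 (orth_projB hpi2 (harmonicB hA1 hA1s hA2)) hxk (opB hA2) //.
  by rewrite (adj_opB hA1 hA1s).
Qed.
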